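(* Let $r\ge 3$, $\varepsilon>0$, and let $G$ be an $n$-vertex $K_r$-free graph such that for every pair of non-adjacent vertices $u,v\in V(G)$, the induced subgraph $G[N(u)\cap N(v)]$ contains at least $\varepsilon n^{r-2}$ copies of $K_{r-2}$. Then $G=F[\cdot]$ for some maximal $K_r$-free graph $F$ on at most $2^{O((\frac{1}{\varepsilon}+r)\log\frac{1}{\varepsilon})}$ vertices, where the implied constant in the $O(\cdot)$ is absolute.
   Context: $G=F[\cdot]$ means that $G$ is a blow-up of $F$: $G$ is obtained from $F$ by replacing each vertex $x$ of $F$ by an independent set $V_x$ (of some positive size, sizes may differ) and each edge $xy$ of $F$ by a complete bipartite graph between $V_x$ and $V_y$, with no other edges. A graph $F$ is maximal $K_r$-free if it is $K_r$-free and adding any new edge creates a copy of $K_r$. Logarithms are natural. *)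

From HB Require Import structures.
From mathcomp Require Import all_boot all_order all_algebra.
From mathcomp Require Import all_classical all_reals all_analysis.
From mathcomp Require Import Rstruct Rstruct_topology.
Set Implicit Arguments. Unset Strict Implicit. Unset Printing Implicit Defensive.
Import Order.TTheory GRing.Theory Num.Theory.

Definition simple_graph (T : finType) (e : rel T) : Prop :=
  symmetric e /\ irreflexive e.

Definition nbhd (T : finType) (e : rel T) (u : T) : {set T} := [set w | e u w].

Definition is_clique (T : finType) (e : rel T) (A : {set T}) : bool :=
  [forall x in A, forall y in A, (x != y) ==> e x y].

Definition Kr_free (T : finType) (e : rel T) (r : nat) : Prop :=
  forall A : {set T}, is_clique e A -> #|A| != r.

Definition add_edge (T : finType) (e : rel T) (x y : T) : rel T :=
  fun a b => [|| e a b, (a == x) && (b == y) | (a == y) && (b == x)].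

Definition maximal_Kr_free (T : finType) (e : rel T) (r : nat) : Prop :=
  Kr_free e r /\
  forall x y : T, x != y -> ~~ e x y ->
    exists A : {set T}, is_clique (add_edge e x y) A /\ #|A| = r.

Definition num_cliques_in (T : finType) (e : rel T) (S : {set T}) (k : nat) : nat :=
  #|[set A : {set T} | [&& A \subset S, is_clique e A & #|A| == k]]|.

(* Since f is irreflexive, each class is an
   independent set, and classes of adjacent vertices are completely joined. *)
Definition is_blowup_of (T U : finType) (e : rel T) (f : rel U) : Prop :=
  exists phi : T -> U,
    (forall u : U, exists x : T, phi x = u) /\
    (forall x y : T, e x y = f (phi x) (phi y)).

(* Vertices with equal neighbourhoods are non-adjacent twins, so G is a blow-up
   of the graph F induced on one vertex per neighbourhood; F is K_r-free, and it
   is maximal because every non-edge has a K_(r-2) in its common neighbourhood.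
   It remains to bound the number of distinct neighbourhoods, k = floor(1/eps).
   (1) If N(x) <> N(y) and x, y are not both universal, some w <> x, y lies in,
   say, N(x) \ N(y); each of the >= eps n^(r-2) copies of K_(r-2) in
   N(y) /\ N(w) meets N(y) \ N(x), so |N(x) \ N(y)| + |N(y) \ N(x)| >= eps n.
   (2) A set A shattered by the neighbourhoods has fewer than r + k elements: pick
   v_a with N(v_a) /\ A = A \ {a}; the a with v_a = a form a clique, and for the
   others the sets of K_(r-2)'s inside N(a) /\ N(v_a) are disjoint, each of size
   >= eps n^(r-2).
   (3) A family with pairwise symmetric differences >= eps n and VC-dimension d
   has fewer than 2^q members once (q/eps)^d << 2^q: a random sample of O(q/eps)
   points separates 2^q members, whose traces shatter at least 2^q subsets of the
   sample by Pajor's lemma, but there are only (q/eps)^O(d) subsets of size <= d.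
   With d = k + r this gives q = O((1/eps + r) log(1/eps)); the fewer than r
   universal vertices contribute at most r more neighbourhoods. *)

From HB Require Import structures.
From mathcomp Require Import all_boot all_order all_algebra.
From mathcomp Require Import all_classical all_reals all_analysis.
From mathcomp Require Import Rstruct Rstruct_topology.
(* Reimported so that the finset versions of set0, subsetP, ... shadow those of
   classical_sets. *)
From mathcomp Require Import fintype finset zify ring.
Import Order.TTheory GRing.Theory Num.Theory.
Set Implicit Arguments. Unset Strict Implicit. Unset Printing Implicit Defensive.

Lemma leq_expn2r m n e : m <= n -> m ^ e <= n ^ e.
Proof. by case: e => [|e] // lemn; rewrite leq_exp2r. Qed.

Lemma ffact_leq_expn n m : n ^_ m <= n ^ m.
Proof.
rewrite ffact_prod -[in n ^ m](card_ord m) -prod_nat_const.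
by apply: leq_prod => i _; apply: leq_subr.
Qed.

Lemma bernoulli_nat k m : k ^ m * (k + m) <= k.+1 ^ m * k.
Proof.
elim: m => [|m IH]; first by rewrite !expn0 addn0.
rewrite !expnS; move: IH; set a := k ^ m => IH.
have : k * a * (k + m.+1) <= k.+1 * (a * (k + m)) by nia.
by move/leq_trans; apply; rewrite -mulnA leq_mul2l IH orbT.
Qed.

Lemma double_expnn_leq k : 0 < k -> 2 * k ^ k <= k.+1 ^ k.
Proof.
move=> k_gt0; have := bernoulli_nat k k.
by rewrite addnn -mul2n mulnA [_ * 2]mulnC leq_pmul2r.
Qed.

Lemma exp2_mul_expnn_leq k t : 0 < k -> 2 ^ t * k ^ (k * t) <= k.+1 ^ (k * t).
Proof. by move=> k_gt0; rewrite !expnM -expnMn leq_expn2r ?double_expnn_leq. Qed.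

Lemma sample_size_bound k r L : 1 < k -> 2 < r -> r <= k + 2 -> k < 2 ^ L -> 1 < L ->
  (k * (2 * (16 * (k + r) * L) + 1)).+1 ^ (k + r.-1) < 2 ^ (16 * (k + r) * L).
Proof.
move=> k_gt1 r_gt2 r_le k_lt L_gt1; set q := 16 * (k + r) * L.
have L_lt : L < 2 ^ L by apply: ltn_expl.
have base : (k * (2 * q + 1)).+1 <= 2 ^ (3 * L + 8).
  have q_le : q <= 48 * k * L by rewrite /q; nia.
  have : (k * (2 * q + 1)).+1 <= 192 * (k * k * L) by nia.
  move/leq_trans; apply; rewrite expnD (mulnC 3 L) expnM mulnC; apply: leq_mul => //.
  by rewrite !expnS expn0 muln1 mulnA; do 2?apply: leq_mul; apply: ltnW.
apply: leq_ltn_trans (leq_expn2r _ base) _; rewrite -expnM ltn_exp2l // /q; nia.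
Qed.

Lemma exists_subset_card (T : finType) (A : {set T}) k :
  k <= #|A| -> exists2 B : {set T}, B \subset A & #|B| = k.
Proof.
move=> le_k_A.
have : 0 < #|[set B : {set T} | B \subset A & #|B| == k]| by rewrite cards_draws bin_gt0.
by case/card_gt0P => B; rewrite inE => /andP[sBA /eqP]; exists B.
Qed.

Lemma leq_card_bigcup (T I : finType) (P : pred I) (G : I -> {set T}) :
  #|\bigcup_(i | P i) G i| <= \sum_(i | P i) #|G i|.
Proof.
elim/big_rec2: _ => [|i X n _ IH]; first by rewrite cards0.
by apply: leq_trans (leq_card_setU _ _) _; rewrite leq_add2l.
Qed.

Lemma card_bigcup_disjoint (T I : finType) (P : pred I) (G : I -> {set T}) :
  {in P &, forall i j, i != j -> [disjoint G i & G j]} ->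
  #|\bigcup_(i | P i) G i| = \sum_(i | P i) #|G i|.
Proof.
move=> disjG; pose G' i := if P i then G i else set0.
have disjG' i j : i != j -> [disjoint G' i & G' j].
  rewrite /G'; case: (boolP (P i)) => Pi; case: (boolP (P j)) => Pj ij;
    rewrite -?setI_eq0 ?set0I ?setI0 //; rewrite setI_eq0; exact: disjG.
rewrite big_mkcond -/G' -sum1_card partition_disjoint_bigcup //= [RHS]big_mkcond.
by apply: eq_bigr => i _; rewrite /G'; case: (P i); rewrite sum1_card ?cards0.
Qed.

Section FiniteSets.
Variable T : finType.
Implicit Types (A B S Y : {set T}) (F M : {set {set T}}).

Lemma setD1_id (x : T) A : x \notin A -> A :\ x = A.
Proof. by move=> xA; apply/setDidPl; rewrite disjoint_sym disjoints1. Qed.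

Definition shatters F Y :=
  [forall B : {set T}, (B \subset Y) ==> [exists A in F, A :&: Y == B]].

Definition shattered F := [set Y | shatters F Y].

Lemma shattersP F Y :
  reflect (forall B, B \subset Y -> exists2 A, A \in F & A :&: Y = B)
          (shatters F Y).
Proof.
apply: (iffP forallP) => [shF B sBY | shF B].
  by move: (shF B); rewrite sBY => /existsP[A /andP[AF /eqP]]; exists A.
apply/implyP => /shF[A AF AYB]; apply/existsP; exists A.
by rewrite AF AYB eqxx.
Qed.

Lemma shatters_sub F Y : shatters F Y -> exists2 A, A \in F & Y \subset A.
Proof. by case/shattersP/(_ Y (subxx _)) => A AF <-; exists A; rewrite ?subsetIl. Qed.

Lemma shattersS F M Y : M \subset F -> shatters M Y -> shatters F Y.
Proof.
move=> sMF /shattersP shM; apply/shattersP => B /shM[A AM <-].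
by exists A; rewrite ?(subsetP sMF).
Qed.

Lemma shatters_traces M S Y :
  shatters [set A :&: S | A in M] Y -> Y \subset S /\ shatters M Y.
Proof.
move=> shMS; have [_ /imsetP[A0 _ ->] sYA0S] := shatters_sub shMS.
have sYS : Y \subset S by apply: subset_trans sYA0S (subsetIr _ _).
split=> //; apply/shattersP => B /(shattersP _ _ shMS)[_ /imsetP[A AM ->] <-].
by exists A; rewrite // -setIA (setIidPr sYS).
Qed.

Section PajorStep.
Variables (F : {set {set T}}) (p : T).

Let Fdel := [set A :\ p | A in F].
Let Fboth := [set A in F | (p \notin A) && (p |: A \in F)].

Lemma card_pajor_split : #|F| = #|Fdel| + #|Fboth|.
Proof.
set Fout := [set A in F | p \notin A]; set Fin := [set A :\ p | A in F & p \in A].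
have -> : #|F| = #|Fout| + #|Fin|.
  rewrite -(cardsID [set A : {set T} | p \notin A] F) card_in_imset => [|A1 A2].
    by congr (_ + _); apply: eq_card => A; rewrite !inE ?negbK andbC.
  rewrite !inE => /andP[_ p1] /andP[_ p2] eqA.
  by rewrite -(setD1K p1) -(setD1K p2) eqA.
have -> : Fdel = Fout :|: Fin.
  apply/setP => B; apply/imsetP/setUP => [[A AF ->] | [|/imsetP[A]]].
  - case pA: (p \in A); last by left; rewrite setD1_id ?pA // inE AF pA.
    by right; apply/imsetP; exists A; rewrite // inE AF.
  - by rewrite inE => /andP[BF pB]; exists B; rewrite ?setD1_id.
  - by rewrite inE => /andP[AF _] ->; exists A.
suff -> : Fboth = Fout :&: Fin by rewrite cardsUI.
apply/setP => B; rewrite !inE; apply/idP/idP => [/and3P[BF pB pBF] | ].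
  by rewrite BF pB; apply/imsetP; exists (p |: B); rewrite ?setU1K // inE pBF setU11.
case/andP => /andP[BF pB] /imsetP[A]; rewrite inE => /andP[AF pA] eqB.
by rewrite eqB setD1K // -eqB BF pB.
Qed.

Lemma shatters_del Y : shatters Fdel Y -> (p \notin Y) && shatters F Y.
Proof.
move=> shY; have [_ /imsetP[A0 _ ->] sYA0] := shatters_sub shY.
have pY : p \notin Y by apply: contraTN isT => /(subsetP sYA0); rewrite setD11.
rewrite pY; apply/shattersP => B /(shattersP _ _ shY)[_ /imsetP[A AF ->] <-].
exists A => //; apply/setP => x; rewrite !inE.
by case: (x =P p) => [-> | _]; rewrite ?(negbTE pY) ?andbF.
Qed.

Lemma shatters_both Y : shatters Fboth Y -> (p \notin Y) && shatters F (p |: Y).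
Proof.
move=> shY; have [A0] := shatters_sub shY; rewrite inE => /and3P[_ pA0 _] sYA0.
have pY : p \notin Y by apply: contraNN pA0 => /(subsetP sYA0).
rewrite pY; apply/shattersP => B sBpY.
have sBY : B :\ p \subset Y by rewrite subDset.
have [A] := shattersP _ _ shY _ sBY; rewrite inE => /and3P[AF pA pAF] AYB.
case pB: (p \in B).
  by exists (p |: A); rewrite // -setUIr AYB setD1K.
have Ap : A :&: [set p] = set0.
  by apply/disjoint_setI0; rewrite disjoint_sym disjoints1.
by exists A; rewrite // setIUr AYB Ap set0U setD1_id ?pB.
Qed.

Lemma card_shattered_split :
  #|shattered Fdel| + #|shattered Fboth| <= #|shattered F|.
Proof.
set Sdel := shattered Fdel; set Sins := [set p |: Y | Y in shattered Fboth].
have -> : #|shattered Fboth| = #|Sins|.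
  rewrite card_in_imset // => Y1 Y2; rewrite !inE => /shatters_both/andP[p1 _].
  by move=> /shatters_both/andP[p2 _] eqY; rewrite -(setU1K p1) -(setU1K p2) eqY.
have disj : Sdel :&: Sins = set0.
  apply/setP => Y; rewrite !inE.
  apply/negP => /andP[/shatters_del/andP[pY _] /imsetP[Y' _ eqY]].
  by rewrite eqY setU11 in pY.
rewrite -cardsUI disj cards0 addn0; apply/subset_leq_card/subsetP => Y.
case/setUP => [| /imsetP[Y']]; rewrite !inE.
  by case/shatters_del/andP.
by case/shatters_both/andP => _ shY ->.
Qed.

End PajorStep.

Lemma card_le_shattered F : #|F| <= #|shattered F|.
Proof.
suff pajor (U : {set T}) : forall F, {in F, forall A, A \subset U} -> #|F| <= #|shattered F|.
  by apply: (pajor setT) => A _; apply: subsetT.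
move: {2}#|U| (erefl #|U|) => n; elim: n U => [|n IH] U cardU {}F sFU.
  have U0 : U = set0 by apply/eqP; rewrite -cards_eq0 cardU.
  have sF0 : F \subset [set set0].
    by apply/subsetP => A /sFU; rewrite U0 subset0 inE.
  case: (set_0Vmem F) => [-> | [A AF]]; first by rewrite cards0.
  apply: leq_trans (subset_leq_card sF0) _; rewrite cards1.
  apply/card_gt0P; exists set0; rewrite inE; apply/shattersP => B.
  by rewrite subset0 => /eqP ->; exists A; rewrite ?setI0.
have [p pU] : exists p, p \in U by apply/set0Pn; rewrite -card_gt0 cardU.
have cardUp : #|U :\ p| = n by move: (cardsD1 p U); rewrite pU cardU add1n => -[].
rewrite (card_pajor_split F p); apply: leq_trans (card_shattered_split F p).
apply: leq_add; apply: (IH (U :\ p)) => // A.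
  by case/imsetP => A' /sFU sA'U ->; apply: setSD.
rewrite inE => /and3P[/sFU sAU pA _]; rewrite -(setD1_id pA); exact: setSD.
Qed.

Lemma card_small_subsets S d :
  #|[set Y : {set T} | Y \subset S & #|Y| <= d]| <= #|S|.+1 ^ d.
Proof.
elim: d => [|d IH].
  rewrite expn0 -(cards1 (set0 : {set T})); apply/subset_leq_card/subsetP => Y.
  by rewrite !inE leqn0 cards_eq0 => /andP[].
set small := [set Y : {set T} | Y \subset S & #|Y| <= d] in IH *.
have grow : [set Y : {set T} | Y \subset S & #|Y| <= d.+1] \subset
            small :|: \bigcup_(x in S) [set x |: Y | Y in small].
  apply/subsetP => Y; rewrite inE => /andP[sYS cardY].
  case: (set_0Vmem Y) => [-> | [x xY]]; first by rewrite !inE sub0set cards0.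
  apply/setUP; right; apply/bigcupP; exists x; first exact: (subsetP sYS).
  apply/imsetP; exists (Y :\ x); last by rewrite setD1K.
  rewrite inE (subset_trans (subD1set _ _) sYS) /=.
  by move: (cardsD1 x Y) cardY; rewrite xY add1n => ->.
apply: leq_trans (subset_leq_card grow) _.
apply: leq_trans (leq_card_setU _ _) _.
apply: leq_trans (leq_add (leqnn _) (leq_card_bigcup _ _)) _.
rewrite expnS mulSn leq_add // -sum_nat_const; apply: leq_sum => x _.
exact: leq_trans (leq_imset_card _ _) IH.
Qed.

(* Counting form of the first moment method: a uniform random s-tuple of points
   misses D i with probability (1 - #|D i| / #|T|)^s. *)
Lemma exists_small_transversal (I : finType) (P : pred I) (D : I -> {set T}) s :
  \sum_(i | P i) (#|T| - #|D i|) ^ s < #|T| ^ s ->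
  exists2 S : {set T}, #|S| <= s & forall i, P i -> ~~ [disjoint S & D i].
Proof.
move=> small_miss.
pose miss i := [set f : {ffun 'I_s -> T} | f \in ffun_on [predC D i]].
have [f] : exists f, f \notin \bigcup_(i | P i) miss i.
  apply/existsP; rewrite -(negbK [exists _, _]) negb_exists; apply/negP.
  move/forallP => allmiss; move: small_miss; rewrite ltnNge => /negP; apply.
  have card_miss i : #|miss i| = (#|T| - #|D i|) ^ s.
    by rewrite cardsE card_ffun_on card_ord -(cardC (D i)) addKn.
  rewrite -(eq_bigr _ (fun i _ => card_miss i)).
  apply: leq_trans (leq_card_bigcup P miss).
  rewrite -{1}(card_ord s) -card_ffun -cardsT.
  by apply/subset_leq_card/subsetP => g _; apply: negbNE (allmiss g).
move=> hit; exists [set f t | t : 'I_s].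
  by rewrite (leq_trans (leq_imset_card _ _)) ?card_ord.
move=> i Pi; apply: contra hit => /pred0P disj; apply/bigcupP; exists i => //.
rewrite inE; apply/ffun_onP => t; rewrite !inE; apply/negP => fDi.
by move: (disj (f t)); rewrite /= fDi andbT imset_f.
Qed.

Lemma exists_separating_set M k q :
  0 < k -> #|M| <= 2 ^ q ->
  {in M &, forall A B, A != B -> #|T| <= k.+1 * #|(A :\: B) :|: (B :\: A)|} ->
  exists2 S : {set T}, #|S| <= k * (2 * q + 1) & {in M &, injective (fun A => A :&: S)}.
Proof.
move=> k_gt0 cardM sepM; set s := k * (2 * q + 1); set n := #|T|.
pose P := [pred AB : {set T} * {set T} | [&& AB.1 \in M, AB.2 \in M & AB.1 != AB.2]].
pose D (AB : {set T} * {set T}) := (AB.1 :\: AB.2) :|: (AB.2 :\: AB.1).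
have miss_le AB : P AB -> (n - #|D AB|) ^ s * k.+1 ^ s <= (k * n) ^ s.
  case/and3P => AM BM neqAB; rewrite -expnMn leq_expn2r //.
  by have := sepM _ _ AM BM neqAB; rewrite /D -/n; move: #|_| => d; nia.
have cardP : #|[set AB | P AB]| <= 2 ^ q * 2 ^ q.
  apply: leq_trans (leq_mul cardM cardM); rewrite -cardsX.
  by apply/subset_leq_card/subsetP => AB; rewrite !inE => /and3P[-> ->].
have [n0 | n_gt0] := posnP n.
  exists set0; rewrite ?cards0 // => A B _ _ _; apply/setP => x.
  by move: (card0_eq n0 x).
(* A random point misses a fixed pair with probability <= k/(k+1), and
   (k/(k+1))^(k t) <= 2^-t; with t = 2q+1 this beats the 2^(2q) pairs. *)
have [S cardS hitS] :
    exists2 S : {set T}, #|S| <= s & forall AB, P AB -> ~~ [disjoint S & D AB].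
  apply: exists_small_transversal.
  rewrite -(ltn_pmul2r (expn_gt0 k.+1 s)) big_distrl /=.
  apply: leq_ltn_trans (@leq_sum _ _ P _ _ miss_le) _.
  rewrite sum_nat_cond_const expnMn mulnA mulnC ltn_pmul2l ?expn_gt0 ?n_gt0 //.
  apply: leq_ltn_trans (leq_mul cardP (leqnn _)) _; rewrite -expnD.
  apply: leq_trans (exp2_mul_expnn_leq (2 * q + 1) k_gt0).
  by rewrite ltn_pmul2r ?expn_gt0 ?k_gt0 // ltn_exp2l // addn1 mul2n -addnn.
exists S => // A B AM BM eqAS; apply/eqP/negPn/negP => neqAB.
have /negP[] : ~~ [disjoint S & D (A, B)] by apply: hitS; rewrite /= AM BM neqAB.
apply/pred0P => x /=; rewrite !inE.
have := congr1 (fun X : {set T} => x \in X) eqAS; rewrite /= !inE.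
by case: (x \in S); rewrite ?andbF ?andbT // => ->; case: (x \in B).
Qed.

Lemma card_separated_family_lt F k d q :
  0 < k ->
  {in F &, forall A B, A != B -> #|T| <= k.+1 * #|(A :\: B) :|: (B :\: A)|} ->
  (forall Y, shatters F Y -> #|Y| <= d) ->
  (k * (2 * q + 1)).+1 ^ d < 2 ^ q ->
  #|F| < 2 ^ q.
Proof.
move=> k_gt0 sepF vcF small_base; rewrite ltnNge; apply/negP.
case/exists_subset_card => M sMF cardM.
have sepM : {in M &, forall A B, A != B -> #|T| <= k.+1 * #|(A :\: B) :|: (B :\: A)|}.
  by move=> A B /(subsetP sMF) AF /(subsetP sMF); apply: sepF.
have [S cardS injS] := exists_separating_set k_gt0 (eq_leq cardM) sepM.
have shS : shattered [set A :&: S | A in M] \subset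
           [set Y : {set T} | Y \subset S & #|Y| <= d].
  apply/subsetP => Y; rewrite !inE => /shatters_traces[sYS /(shattersS sMF)/vcF].
  by rewrite sYS.
suff : 2 ^ q <= (k * (2 * q + 1)).+1 ^ d by rewrite leqNgt small_base.
rewrite -cardM -(card_in_imset injS); apply: leq_trans (card_le_shattered _) _.
apply: leq_trans (subset_leq_card shS) _; apply: leq_trans (card_small_subsets S d) _.
exact: leq_expn2r.
Qed.
End FiniteSets.

Section Cliques.
Variables (T : finType) (e : rel T).
Implicit Types (A B K S : {set T}).

Lemma cliqueP A : reflect {in A &, forall x y, x != y -> e x y} (is_clique e A).
Proof.
apply: (iffP forallP) => [clA x y xA yA | clA x].
  by move: (clA x); rewrite xA => /forall_inP/(_ y yA)/implyP.
by apply/implyP => xA; apply/forall_inP => y yA; apply/implyP; apply: clA.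
Qed.

Lemma clique_subset A B : B \subset A -> is_clique e A -> is_clique e B.
Proof.
by move=> /subsetP sBA /cliqueP clA; apply/cliqueP => x y /sBA xA /sBA; apply: clA.
Qed.

Lemma cliqueU1 x A : symmetric e -> is_clique e A ->
  {in A, forall a, a != x -> e x a} -> is_clique e (x |: A).
Proof.
move=> esym /cliqueP clA xA; apply/cliqueP => a b; rewrite !in_setU1.
case/predU1P => [-> | aA] /predU1P[-> | bA]; rewrite ?eqxx // => ab.
- by apply: xA; rewrite // eq_sym.
- by rewrite esym; apply: xA.
- exact: clA.
Qed.

Lemma Kr_free_card_lt r A : Kr_free e r -> is_clique e A -> #|A| < r.
Proof.
move=> Krfree clA; rewrite ltnNge; apply/negP => /exists_subset_card[B sBA cardB].
by move: (Krfree B (clique_subset sBA clA)); rewrite cardB eqxx.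
Qed.

Definition cliques_in S (k : nat) :=
  [set A : {set T} | [&& A \subset S, is_clique e A & #|A| == k]].

Lemma num_cliques_in_fact S k : num_cliques_in e S k * k`! <= #|T| ^ k.
Proof.
apply: leq_trans (ffact_leq_expn _ _); rewrite -bin_ffact leq_mul2r -card_draws.
by apply/orP; right; apply/subset_leq_card/subsetP => A; rewrite !inE => /and3P[].
Qed.

Lemma card_sets_through z k : #|[set K : {set T} | z \in K & #|K| == k.+1]| <= #|T| ^ k.
Proof.
apply: leq_trans (_ : 'C(#|T|, k) <= _).
  rewrite -card_draws -(card_in_imset (f := fun K => K :\ z)) => [|K1 K2].
    apply/subset_leq_card/subsetP => A /imsetP[K]; rewrite !inE => /andP[zK /eqP cardK] ->.
    by move: (cardsD1 z K); rewrite zK cardK add1n => -[->].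
  by rewrite !inE => /andP[z1 _] /andP[z2 _] eqK; rewrite -(setD1K z1) -(setD1K z2) eqK.
by apply: leq_trans (ffact_leq_expn _ _); rewrite -bin_ffact leq_pmulr ?fact_gt0.
Qed.

End Cliques.

Local Open Scope ring_scope.

Section DenseKrFree.
Variables (R : realFieldType) (T : finType) (e : rel T) (r : nat) (eps : R).
Hypotheses (esym : symmetric e) (eirr : irreflexive e).
Hypotheses (r_gt2 : (2 < r)%N) (eps_gt0 : 0 < eps) (Krfree : Kr_free e r).
Hypothesis dense : forall u v : T, u != v -> ~~ e u v ->
  eps * #|T|%:R ^+ (r - 2) <= (num_cliques_in e (nbhd e u :&: nbhd e v) (r - 2))%:R.

Local Notation N := (nbhd e).
Local Notation n := #|T|.
Local Notation j := (r - 2)%N.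
Implicit Types (A K : {set T}).

Lemma in_nbhd x y : (y \in N x) = e x y.
Proof. by rewrite inE. Qed.

Lemma edge_common_nbhd_clique x w K :
  e x w -> K \subset N x :&: N w -> is_clique e K -> #|K| != j.
Proof.
move=> exw /subsetP sK clK; apply/eqP => cardK.
have eK a : a \in K -> e x a && e w a by move/sK; rewrite !inE.
have wK : w \notin K by apply/negP => /eK; rewrite eirr andbF.
have xwK : x \notin w |: K.
  rewrite !inE negb_or; apply/andP; split; last by apply/negP => /eK; rewrite eirr.
  by apply: contraTneq exw => ->; rewrite eirr.
have clwK : is_clique e (w |: K) by apply: cliqueU1 => // a /eK /andP[].
have clxwK : is_clique e (x |: (w |: K)).
  by apply: cliqueU1 => // a; rewrite !inE => /predU1P[-> | /eK /andP[]].
by have := Kr_free_card_lt Krfree clxwK; rewrite !cardsU1 xwK wK cardK; lia.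
Qed.

Lemma exists_common_clique u v : u != v -> ~~ e u v ->
  exists K, K \in cliques_in e (N u :&: N v) j.
Proof.
move=> uv euv; have dense_gt0 : 0 < eps * n%:R ^+ j.
  by rewrite mulr_gt0 // exprn_gt0 // ltr0n; apply/card_gt0P; exists u.
by have := lt_le_trans dense_gt0 (dense uv euv); rewrite ltr0n => /card_gt0P.
Qed.

Lemma card_nbhdD_ge x y w : w \in N x -> w \notin N y -> w != y ->
  eps * n%:R <= #|N y :\: N x|%:R.
Proof.
move=> wx wy wny; set D := N y :\: N x; rewrite in_nbhd in wx.
have n_gt0 : (0 < n)%N by apply/card_gt0P; exists x.
have rS : j = (r - 3)%N.+1 by lia.
(* A K_(r-2) of N y :&: N w avoiding D lies in N x :&: N w and extends to a K_r. *)
have cover : cliques_in e (N y :&: N w) j \subset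
    \bigcup_(z in D) [set K : {set T} | z \in K & #|K| == j].
  apply/subsetP => K; rewrite inE => /and3P[sK clK /eqP cardK].
  case: (boolP [exists a in K, a \in D]) => [/existsP[c /andP[cK cD]] | noD].
    by apply/bigcupP; exists c; rewrite // inE cK cardK eqxx.
  suff sKxw : K \subset N x :&: N w.
    by move: (edge_common_nbhd_clique wx sKxw clK); rewrite cardK eqxx.
  apply/subsetP => a aK; move: (subsetP sK a aK); rewrite !inE => /andP[ya ->].
  rewrite andbT; apply: contraNT noD => xa; apply/existsP; exists a.
  by rewrite aK !inE xa.
have card_cl : (num_cliques_in e (N y :&: N w) j <= #|D| * n ^ (r - 3))%N.
  apply: leq_trans (subset_leq_card cover) _; apply: leq_trans (leq_card_bigcup _ _) _.
  by rewrite -sum_nat_const; apply: leq_sum => z _; rewrite rS card_sets_through.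
have yw : y != w by rewrite eq_sym.
have ywE : ~~ e y w by rewrite -in_nbhd.
have dense_D : eps * n%:R ^+ j <= (#|D| * n ^ (r - 3))%:R.
  by apply: le_trans (dense yw ywE) _; rewrite ler_nat.
by move: dense_D; rewrite rS exprS natrM natrX mulrA ler_pM2r // exprn_gt0 // ltr0n.
Qed.

Definition universal x := [forall z, (z != x) ==> e x z].

Lemma universal_of_twin x y : e x y ->
  (forall z, z != x -> z != y -> (z \in N x) = (z \in N y)) -> universal x.
Proof.
move=> exy twin; apply/forallP => z; apply/implyP => zx; apply/negPn/negP => exz.
have xz : x != z by rewrite eq_sym.
have zy : z != y by apply: contraNneq exz => ->.
have [K] := exists_common_clique xz exz; rewrite inE => /and3P[sK clK /eqP cardK].
suff sKxy : K \subset N x :&: N y.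
  by move: (edge_common_nbhd_clique exy sKxy clK); rewrite cardK eqxx.
apply/subsetP => a aK; move: (subsetP sK a aK); rewrite !inE => /andP[xa za].
have ax : a != x by apply: contraTneq xa => ->; rewrite eirr.
have ay : a != y.
  by apply: contraNneq exz => ay; rewrite -in_nbhd twin // in_nbhd esym -ay.
by rewrite xa -in_nbhd -(twin a ax ay) in_nbhd.
Qed.

Lemma exists_nbhd_witness x y : N x != N y -> ~~ (universal x && universal y) ->
  exists2 w, w \in (N x :\: N y) :|: (N y :\: N x) & (w != x) && (w != y).
Proof.
move=> nxy nu.
case: (boolP [exists w in (N x :\: N y) :|: (N y :\: N x), (w != x) && (w != y)]).
  by case/exists_inP => w; exists w.
move/exists_inPn => none.
have twin z : z != x -> z != y -> (z \in N x) = (z \in N y).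
  move=> zx zy; move: (none z); rewrite zx zy !inE.
  by case: (e x z); case: (e y z) => // /(_ isT).
have exy : e x y.
  apply: contraNT nxy => nexy; apply/eqP/setP => z.
  case: (eqVneq z x) => [-> | zx]; first by rewrite !in_nbhd eirr esym (negbTE nexy).
  case: (eqVneq z y) => [-> | zy]; first by rewrite !in_nbhd eirr (negbTE nexy).
  exact: twin.
case/negP: nu; rewrite (universal_of_twin exy twin).
by apply: (universal_of_twin (y := x)) => [|z zy zx]; rewrite 1?esym ?twin.
Qed.

Lemma nbhd_separated x y : N x != N y -> ~~ (universal x && universal y) ->
  eps * n%:R <= #|(N x :\: N y) :|: (N y :\: N x)|%:R.
Proof.
move=> nxy nu; have [w] := exists_nbhd_witness nxy nu.
case/setUP => /setDP[w1 w2] /andP[wx wy].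
  apply: le_trans (card_nbhdD_ge w1 w2 wy) _.
  by rewrite ler_nat; apply/subset_leq_card/subsetUr.
apply: le_trans (card_nbhdD_ge w1 w2 wx) _.
by rewrite ler_nat; apply/subset_leq_card/subsetUl.
Qed.

Lemma card_universal_lt : (#|[set x | universal x]| < r)%N.
Proof.
apply: Kr_free_card_lt Krfree _; apply/cliqueP => x y; rewrite !inE.
by move=> /forallP/(_ y) + _ xy; rewrite eq_sym xy.
Qed.

Lemma eps_fact_le1 u v : u != v -> ~~ e u v -> eps * (j`!)%:R <= 1.
Proof.
move=> uv euv; have n_gt0 : 0 < n%:R ^+ j :> R.
  by rewrite exprn_gt0 // ltr0n; apply/card_gt0P; exists u.
rewrite -(ler_pM2r n_gt0) mul1r mulrAC.
apply: le_trans (_ : (num_cliques_in e (N u :&: N v) j * j`!)%:R <= _).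
  by rewrite natrM ler_pM2r ?ltr0n ?fact_gt0 // dense.
by rewrite -natrX ler_nat num_cliques_in_fact.
Qed.

Lemma card_cross_nonedges_le (V : {set T}) (g : T -> T) :
  {in V, forall a, g a != a} -> {in V, forall a, ~~ e a (g a)} ->
  {in V &, forall a b, a != b -> e (g b) a} ->
  #|V|%:R * eps <= 1.
Proof.
move=> g_neq g_nonedge cross.
have [-> | [a0 a0V]] := set_0Vmem V; first by rewrite cards0 mul0r.
have n_gt0 : 0 < n%:R ^+ j :> R.
  by rewrite exprn_gt0 // ltr0n; apply/card_gt0P; exists a0.
pose Z a := cliques_in e (N a :&: N (g a)) j.
have disjZ : {in V &, forall a b, a != b -> [disjoint Z a & Z b]}.
  move=> a b aV bV ab; rewrite -setI_eq0; apply/eqP/setP => K; rewrite !inE.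
  apply/negP => /andP[/and3P[sKa clK /eqP cardK] /and3P[sKb _ _]].
  suff sK : K \subset N (g b) :&: N a.
    by move: (edge_common_nbhd_clique (cross a b aV bV ab) sK clK); rewrite cardK eqxx.
  rewrite setIC subsetI (subset_trans sKa (subsetIl _ _)).
  exact: subset_trans sKb (subsetIr _ _).
have sumZ : (\sum_(a in V) #|Z a| <= n ^ j)%N.
  rewrite -card_bigcup_disjoint //.
  apply: leq_trans (num_cliques_in_fact e setT j).
  apply: leq_trans (leq_pmulr _ (fact_gt0 j)).
  apply/subset_leq_card/bigcupsP => a _; apply/subsetP => K; rewrite !inE.
  by case/and3P => _ -> ->; rewrite subsetT.
rewrite -(ler_pM2r n_gt0) mul1r -mulrA -natrX.
apply: le_trans (_ : (\sum_(a in V) #|Z a|)%:R <= _); last by rewrite ler_nat.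
rewrite natr_sum -sum1_card natr_sum mulr_suml; apply: ler_sum => a aV.
by rewrite mul1r natrX dense ?g_nonedge // eq_sym g_neq.
Qed.

Lemma shattered_nbhds_card_le A : shatters [set N v | v in T] A ->
  exists m, (#|A| <= m + r.-1)%N /\ m%:R * eps <= 1.
Proof.
move=> shA; have gP a : exists v, N v :&: A == A :\ a.
  by have [_ /imsetP[v _ ->] vA] := shattersP _ _ shA _ (subD1set A a); exists v; rewrite vA.
pose g a := xchoose (gP a); have gE a : N (g a) :&: A = A :\ a := eqP (xchooseP (gP a)).
have in_g a b : a \in A -> (a \in N (g b)) = (a != b).
  by move=> aA; have := congr1 (fun X : {set T} => a \in X) (gE b); rewrite !inE aA !andbT.
set V := [set a in A | g a != a]; set I := [set a in A | g a == a].
have cardA : #|A| = (#|V| + #|I|)%N.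
  rewrite -(cardsID [set a | g a != a] A); congr (_ + _)%N; apply: eq_card => a.
    by rewrite !inE andbC.
  by rewrite !inE negbK andbC.
have I_lt : (#|I| < r)%N.
  apply: Kr_free_card_lt Krfree _; apply/cliqueP => a b; rewrite !inE.
  by move=> /andP[_ /eqP ga] /andP[bA _] ab; rewrite -in_nbhd -ga in_g // eq_sym.
exists #|V|; split; first by rewrite cardA; lia.
apply: (card_cross_nonedges_le (g := g)) => [a | a | a b].
- by rewrite inE => /andP[].
- by rewrite inE => /andP[aA _]; rewrite esym -in_nbhd in_g // eqxx.
- by rewrite !inE => /andP[aA _] /andP[bA _] ab; rewrite -in_nbhd in_g.
Qed.

Variable k : nat.
Hypotheses (k_gt1 : (1 < k)%N) (eps_k : 1 < eps * k.+1%:R).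

Lemma leq_k_of_eps m : m%:R * eps <= 1 -> (m <= k)%N.
Proof.
move=> m_eps; rewrite -ltnS -(ltr_nat R) -(ltr_pM2r eps_gt0).
by apply: le_lt_trans m_eps _; rewrite mulrC.
Qed.

Lemma card_nonuniversal_nbhds_lt :
  (#|[set N x | x in [set x | ~~ universal x]]| < 2 ^ (16 * (k + r) * (trunc_log 2 k).+1))%N.
Proof.
set F := [set N x | x in _].
have [-> | [A0 /imsetP[x0]]] := set_0Vmem F; first by rewrite cards0 expn_gt0.
rewrite inE => /forallPn[z]; rewrite negb_imply => /andP[zx0 ex0z] _.
have r_le : (r <= k + 2)%N.
  have /leq_k_of_eps fact_le : (j`!)%:R * eps <= 1.
    by rewrite mulrC (eps_fact_le1 _ ex0z) // eq_sym.
  by have := leq_trans (fact_geq j) fact_le; lia.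
apply: (card_separated_family_lt (k := k) (d := (k + r.-1)%N)) => //.
- by apply: ltnW.
- move=> _ _ /imsetP[x + ->] /imsetP[y _ ->] nxy; rewrite inE => ux.
  have sep : eps * n%:R <= #|(N x :\: N y) :|: (N y :\: N x)|%:R.
    by apply: nbhd_separated; rewrite // negb_and ux.
  rewrite -(ler_nat R) natrM; apply: le_trans (_ : eps * k.+1%:R * n%:R <= _).
    by rewrite ler_pMl ?ltW // ltr0n; apply/card_gt0P; exists x.
  by rewrite mulrAC mulrC; apply: ler_wpM2l.
- move=> Y /(shattersS (_ : F \subset [set N v | v in T])) shY.
  have [|m [Y_le /leq_k_of_eps m_le]] := shattered_nbhds_card_le (shY _).
    by apply/subsetP => _ /imsetP[x _ ->]; apply: imset_f.
  by apply: leq_trans Y_le _; rewrite leq_add2r.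
- by apply: sample_size_bound; rewrite // ?trunc_log_ltn // ltnS trunc_log_gt0.
Qed.

Lemma card_nbhds_le :
  (#|[set N x | x in T]| <= 2 ^ (16 * (k + r) * (trunc_log 2 k).+1).+1)%N.
Proof.
set q := (16 * (k + r) * (trunc_log 2 k).+1)%N.
have split : [set N x | x in T] \subset
    [set N x | x in [set x | ~~ universal x]] :|: [set N x | x in [set x | universal x]].
  apply/subsetP => _ /imsetP[x _ ->]; rewrite inE.
  by case: (boolP (universal x)) => ux; apply/orP; [right | left]; apply: imset_f; rewrite inE.
apply: leq_trans (subset_leq_card split) _; apply: leq_trans (leq_card_setU _ _) _.
rewrite expnS mul2n -addnn; apply: leq_add; first exact: ltnW card_nonuniversal_nbhds_lt.
apply: leq_trans (leq_imset_card _ _) _; apply: ltnW; apply: leq_trans card_universal_lt _.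
by apply: ltnW; apply: leq_trans (ltn_expl r (ltnSn 1)) _; rewrite leq_exp2l // /q; nia.
Qed.

End DenseKrFree.
Lemma add_edge_sym (U : finType) (f : rel U) x y :
  symmetric f -> symmetric (add_edge f x y).
Proof.
move=> fsym a b; rewrite /add_edge fsym; congr (_ || _).
by rewrite orbC andbC [(b == y) && _]andbC.
Qed.

Lemma clique_subrel (U : finType) (f f' : rel U) A :
  subrel f f' -> is_clique f A -> is_clique f' A.
Proof. by move=> sff' /cliqueP clA; apply/cliqueP => x y xA yA /(clA x y xA yA)/sff'. Qed.

Section TwinQuotient.
Variables (T : finType) (e : rel T).
Hypotheses (esym : symmetric e) (eirr : irreflexive e).

Local Notation N := (nbhd e).

Definition twin_class := {A : {set T} | A \in [set N x | x in T]}.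

Lemma nbhd_in_classes x : N x \in [set N x | x in T].
Proof. by apply/imsetP; exists x. Qed.

Definition twin_of (x : T) : twin_class := exist _ (N x) (nbhd_in_classes x).

Lemma twin_of_surj (a : twin_class) : exists x, twin_of x == a.
Proof. by have /imsetP[x _ ax] := valP a; exists x; apply/eqP/val_inj. Qed.

Definition twin_repr (a : twin_class) : T := xchoose (twin_of_surj a).

Lemma twin_reprK : cancel twin_repr twin_of.
Proof. by move=> a; apply/eqP/(xchooseP (twin_of_surj a)). Qed.

Definition twin_rel : rel twin_class := fun a b => e (twin_repr a) (twin_repr b).

Lemma twin_relE x y : twin_rel (twin_of x) (twin_of y) = e x y.
Proof.
have twin_adj z z' w : N z = N z' -> e z w = e z' w.
  by move=> eqN; rewrite -!in_nbhd eqN.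
have reprN z : N (twin_repr (twin_of z)) = N z.
  by move: (congr1 val (twin_reprK (twin_of z))).
by rewrite /twin_rel (twin_adj _ _ _ (reprN x)) esym (twin_adj _ _ _ (reprN y)) esym.
Qed.

Lemma twin_rel_sym : symmetric twin_rel.
Proof. by move=> a b; rewrite /twin_rel esym. Qed.

Lemma twin_rel_irr : irreflexive twin_rel.
Proof. by move=> a; rewrite /twin_rel eirr. Qed.

Lemma blowup_twin : is_blowup_of e twin_rel.
Proof.
exists twin_of; split => [a | x y]; last by rewrite twin_relE.
by exists (twin_repr a); rewrite twin_reprK.
Qed.

Lemma twin_of_neq x y : e x y -> twin_of x != twin_of y.
Proof. by rewrite -twin_relE; apply: contraTneq => ->; rewrite twin_rel_irr. Qed.

Lemma clique_twin K : is_clique e K -> is_clique twin_rel (twin_of @: K).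
Proof.
move=> /cliqueP clK; apply/cliqueP => _ _ /imsetP[x xK ->] /imsetP[y yK ->] nxy.
by rewrite twin_relE clK //; apply: contraNneq nxy => ->.
Qed.

Lemma card_clique_twin K : is_clique e K -> #|twin_of @: K| = #|K|.
Proof.
move=> /cliqueP clK; apply: card_in_imset => x y xK yK.
by apply: contra_eq => /(clK x y xK yK)/twin_of_neq.
Qed.

Lemma card_twin_class : #|{: twin_class}| = #|[set N x | x in T]|.
Proof. exact: card_sig. Qed.

Variable r : nat.
Hypothesis Krfree : Kr_free e r.

Lemma Kr_free_twin : Kr_free twin_rel r.
Proof.
move=> A clA; have reprA : is_clique e (twin_repr @: A).
  apply/cliqueP => _ _ /imsetP[a aA ->] /imsetP[b bA ->] nab.
  by apply: (cliqueP _ _ clA) => //; apply: contraNneq nab => ->.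
rewrite -(card_imset _ (can_inj twin_reprK)).
by have := Kr_free_card_lt Krfree reprA; rewrite ltn_neqAle => /andP[].
Qed.

Lemma maximal_Kr_free_twin : (2 <= r)%N ->
  (forall u v, u != v -> ~~ e u v -> exists K, K \in cliques_in e (N u :&: N v) (r - 2)) ->
  maximal_Kr_free twin_rel r.
Proof.
move=> r_ge2 common; split=> [|a b ab nfab]; first exact: Kr_free_twin.
set x := twin_repr a; set y := twin_repr b.
have xy : x != y.
  by apply: contra_neq ab => eqxy; rewrite -(twin_reprK a) -(twin_reprK b) -/x eqxy.
have [K] := common x y xy nfab; rewrite inE => /and3P[/subsetP sK clK /eqP cardK].
have Kx z : z \in K -> e x z by move/sK; rewrite !inE => /andP[].
have Ky z : z \in K -> e y z by move/sK; rewrite !inE => /andP[].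
have tK c : c \in twin_of @: K -> twin_rel a c && twin_rel b c.
  by case/imsetP => z zK ->; rewrite -(twin_reprK a) -(twin_reprK b) !twin_relE Kx ?Ky.
have aK : a \notin twin_of @: K by apply/negP => /tK; rewrite twin_rel_irr.
have bK : b \notin twin_of @: K by apply/negP => /tK; rewrite twin_rel_irr andbF.
exists (a |: (b |: twin_of @: K)); split; last first.
  by rewrite !cardsU1 !inE negb_or ab aK bK card_clique_twin // cardK; lia.
have sym := add_edge_sym a b twin_rel_sym.
have sub : subrel twin_rel (add_edge twin_rel a b) by move=> c d; rewrite /add_edge => ->.
apply: cliqueU1 => //; first apply: cliqueU1 => //.
- exact: clique_subrel sub (clique_twin clK).
- by move=> c /tK /andP[_ /sub].
- move=> c; rewrite in_setU1 => /predU1P[-> _ | /tK /andP[/sub ? _] _] //.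
  by rewrite /add_edge !eqxx orbT.
Qed.

End TwinQuotient.

Lemma truncn_inv_bounds (R : realType) (eps : R) : 0 < eps -> eps <= 2^-1 ->
  let k := Num.truncn eps^-1 in [/\ (1 < k)%N, k%:R <= eps^-1 & 1 < eps * k.+1%:R].
Proof.
move=> eps_gt0 eps_le k; have inv_ge2 : 2 <= eps^-1 by rewrite invf_pge ?posrE.
split; first by rewrite /k truncn_gt_nat.
  by rewrite /k truncn_le ltW // invr_gt0.
by rewrite -[X in X < _](mulfV (lt0r_neq0 eps_gt0)) ltr_pM2l // /k truncnS_gt.
Qed.

Lemma exponent_le (R : realType) (eps : R) (r k : nat) :
  0 < eps -> (1 < k)%N -> k%:R <= eps^-1 ->
  (16 * (k + r) * (trunc_log 2 k).+1).+1%:R <=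
    34 / ln 2 * (eps^-1 + r%:R) * ln (eps^-1).
Proof.
move=> eps_gt0 k_gt1 k_le; set L := (trunc_log 2 k).+1.
have ln2_gt0 : 0 < ln (2 : R) by rewrite ln_gt0 // ltr1n.
have inv_gt0 : 0 < eps^-1 by rewrite invr_gt0.
have L_le : (2 ^ L <= k * k)%N.
  rewrite expnS; apply: leq_trans (leq_mul (leqnn 2) (trunc_logP _ _)) _ => //; first lia.
  by rewrite leq_mul2r k_gt1 orbT.
have L_ln : L%:R * ln 2 <= 2 * ln (eps^-1).
  rewrite !mulr_natl -!lnXn // ler_ln ?posrE ?exprn_gt0 //.
  apply: le_trans (_ : (k * k)%:R <= _); first by rewrite -natrX ler_nat.
  by rewrite natrM expr2 ler_pM // ler0n.
have -> : 34 / ln 2 * (eps^-1 + r%:R) * ln (eps^-1) =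
          17%:R * (eps^-1 + r%:R) * (2 * ln (eps^-1) / ln 2).
  move: (ln 2) (gt_eqF ln2_gt0) => l l_neq0.
  by field; rewrite l_neq0 gt_eqF.
apply: le_trans (_ : (17 * (k + r) * L)%:R <= _); first by rewrite ler_nat; nia.
rewrite !natrM natrD; apply: ler_pM; rewrite ?mulr_ge0 ?ler0n //.
  by apply: ler_wpM2l; rewrite ?ler0n // lerD2r.
by rewrite ler_pdivlMr.
Qed.

Theorem theorem1p6 :
  exists C : Rdefinitions.R, 0 < C /\
  forall (r : nat) (eps : Rdefinitions.R) (T : finType) (e : rel T),
    (3 <= r)%N -> 0 < eps -> eps <= 2^-1 ->
    simple_graph e -> Kr_free e r ->
    (forall u v : T, u != v -> ~~ e u v ->
       eps * (#|T|%:R) ^+ (r - 2) <=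
         (num_cliques_in e (nbhd e u :&: nbhd e v) (r - 2))%:R) ->
    exists (U : finType) (f : rel U),
      [/\ simple_graph f, maximal_Kr_free f r, is_blowup_of e f &
          (#|U|%:R <= powR 2 (C * (eps^-1 + r%:R) * ln (eps^-1)))].
Proof.
exists (34 / ln 2); split; first by rewrite divr_gt0 // ln_gt0 // ltr1n.
move=> r eps T e r_ge3 eps_gt0 eps_le [esym eirr] Krfree dense.
exists (twin_class e), (@twin_rel T e); split.
- by split; [apply: twin_rel_sym | apply: twin_rel_irr].
- apply: (maximal_Kr_free_twin esym eirr Krfree); first lia.
  by move=> u v; apply: (exists_common_clique (u := u) (v := v) eps_gt0 dense).
- exact: blowup_twin.
have [k_gt1 k_le eps_k] := truncn_inv_bounds eps_gt0 eps_le.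
set k := Num.truncn eps^-1 in k_gt1 k_le eps_k *.
rewrite card_twin_class.
apply: le_trans (_ : (2 ^ (16 * (k + r) * (trunc_log 2 k).+1).+1)%:R <= _).
  by rewrite ler_nat (card_nbhds_le esym eirr _ eps_gt0 Krfree dense k_gt1 eps_k).
by rewrite natrX -powR_mulrn ?ler0n // ler_powR ?ler1n // exponent_le.
Qed.
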